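(* Let $K$ be a field with a non-trivial non-Archimedean valuation $|\cdot|$, let $X$ be a complete non-Archimedean normed space over $K$, fix $k\in\mathbb N$ with $|2k^3|\neq0$, and for $f:G\to X$ let $$Df(x,y)=f(kx+y)+f(kx-y)-k[f(x+y)+f(x-y)]-2(k^3-k)f(x).$$ Let $\alpha:[0,\infty)\to[0,\infty)$ be a function satisfying (i) $\alpha(|k|t)\le\alpha(|k|)\alpha(t)$ for all $t\ge0$, and (ii) $\alpha(|k|)<|k|^3$. Let $\delta>0$, let $G$ be a normed space, and let $f:G\to X$ satisfy $$\|Df(x,y)\|\le\delta[\alpha(\|x\|)+\alpha(\|y\|)]\quad\text{for all }x,y\in G.$$ Then there exists a unique cubic mapping $C:G\to X$ (i.e. $DC(x,y)=0$ for all $x,y\in G$) such that $$\|f(x)-C(x)\|\le\frac{1}{|2k^3|}\delta\,\alpha(\|x\|)\quad\text{for all }x\in G.$$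
   Context: A non-Archimedean field is a field $K$ with $|\cdot|:K\to[0,\infty)$ such that $|r|=0$ iff $r=0$, $|rs|=|r||s|$, $|r+s|\le\max\{|r|,|s|\}$. A non-Archimedean norm on a $K$-vector space satisfies $\|x\|=0$ iff $x=0$, $\|rx\|=|r|\|x\|$, $\|x+y\|\le\max\{\|x\|,\|y\|\}$. Integers are regarded as elements of $K$ and $|k|$ is the valuation of $k$ in $K$. *)

From HB Require Import structures.
From mathcomp Require Import all_boot all_order all_algebra.
From mathcomp Require Import reals.
Set Implicit Arguments. Unset Strict Implicit. Unset Printing Implicit Defensive.
Import Order.TTheory GRing.Theory Num.Theory.
Local Open Scope ring_scope.

Definition nonarch_abs (R : realType) (K : fieldType) (abs : K -> R) : Prop :=
  (forall r, 0 <= abs r) /\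
  (forall r, abs r = 0 <-> r = 0) /\
  (forall r s, abs (r * s) = abs r * abs s) /\
  (forall r s, abs (r + s) <= Num.max (abs r) (abs s)).

Definition nontrivial_abs (R : realType) (K : fieldType) (abs : K -> R) : Prop :=
  exists r : K, abs r <> 0 /\ abs r <> 1.

Definition nonarch_norm (R : realType) (K : fieldType) (abs : K -> R)
  (X : lmodType K) (nrm : X -> R) : Prop :=
  (forall x, 0 <= nrm x) /\
  (forall x, nrm x = 0 <-> x = 0) /\
  (forall (r : K) x, nrm (r *: x) = abs r * nrm x) /\
  (forall x y, nrm (x + y) <= Num.max (nrm x) (nrm y)).

Definition is_norm (R : realType) (K : fieldType) (abs : K -> R)
  (G : lmodType K) (nrm : G -> R) : Prop :=
  (forall x, 0 <= nrm x) /\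
  (forall x, nrm x = 0 <-> x = 0) /\
  (forall (r : K) x, nrm (r *: x) = abs r * nrm x) /\
  (forall x y, nrm (x + y) <= nrm x + nrm y).

Definition cauchy_seq (R : realType) (K : fieldType) (X : lmodType K)
  (nrm : X -> R) (u : nat -> X) : Prop :=
  forall eps : R, 0 < eps -> exists N : nat, forall m n : nat,
    (N <= m)%N -> (N <= n)%N -> nrm (u m - u n) < eps.

Definition converges_to (R : realType) (K : fieldType) (X : lmodType K)
  (nrm : X -> R) (u : nat -> X) (l : X) : Prop :=
  forall eps : R, 0 < eps -> exists N : nat, forall n : nat,
    (N <= n)%N -> nrm (u n - l) < eps.

Definition complete_normed (R : realType) (K : fieldType) (X : lmodType K)
  (nrm : X -> R) : Prop :=
  forall u : nat -> X, cauchy_seq nrm u -> exists l, converges_to nrm u l.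

Definition Dk (K : fieldType) (G X : lmodType K) (k : nat) (f : G -> X)
  (x y : G) : X :=
  f ((k%:R : K) *: x + y) + f ((k%:R : K) *: x - y)
  - (k%:R : K) *: (f (x + y) + f (x - y))
  - (2 * ((k ^ 3)%:R - k%:R) : K) *: f x.

Definition cubic_map (K : fieldType) (G X : lmodType K) (k : nat) (C : G -> X) : Prop :=
  forall x y, Dk k C x y = 0.

From HB Require Import structures.
From mathcomp Require Import all_boot all_order all_algebra.
From mathcomp Require Import reals.
From mathcomp Require Import ring lra.
From Stdlib Require Import FunctionalExtensionality ClassicalEpsilon.
Import Order.TTheory GRing.Theory Num.Theory.

Set Implicit Arguments.
Unset Strict Implicit.
Unset Printing Implicit Defensive.

Local Open Scope ring_scope.

(* Putting y = 0 gives |2 k^3| * |f(x) - k^-3 f(kx)| <= delta alpha(|x|), so f is almost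
   fixed by J g (x) = k^-3 g(kx).  Since |k| <= 1, condition (i) yields
   alpha(|k^n x|) <= alpha(|k|)^n alpha(|x|), and the n-th step of the sequence
   J^n f (x) = k^-3n f(k^n x) is bounded by r^n delta alpha(|x|) / |2 k^3| with
   r = alpha(|k|) / |k|^3 < 1 by (ii).  In the ultrametric norm these bounds do not add
   up, so the sequence is Cauchy, its limit C stays within the first bound of f, and
   C is cubic because D (J^n f) is bounded by r^n delta (alpha(|x|) + alpha(|y|)).
   Cubic maps are fixed by J, which contracts the distance between two approximants by r;
   hence C is unique. *)

Lemma bernoulli_ineq (R : realDomainType) (d : R) (n : nat) :
  0 <= d -> 1 + n%:R * d <= (1 + d) ^+ n.
Proof.
move=> d_ge0; elim: n => [|n IH]; first by rewrite mul0r addr0 expr0.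
rewrite exprS -natr1.
have nd_ge0 : 0 <= n%:R * d by apply: mulr_ge0.
have : (1 + d) * (1 + n%:R * d) <= (1 + d) * (1 + d) ^+ n.
  by apply: ler_wpM2l => //; lra.
have : 0 <= d * (n%:R * d) by apply: mulr_ge0.
lra.
Qed.

Lemma expr_lt_eps (R : archiRealFieldType) (r e : R) :
  0 <= r -> r < 1 -> 0 < e -> exists N : nat, r ^+ N < e.
Proof.
move=> r_ge0 r_lt1 e_gt0.
have [->|r_neq0] := eqVneq r 0; first by exists 1%N; rewrite expr1.
have r_gt0 : 0 < r by rewrite lt_def r_neq0 r_ge0.
have d_gt0 : 0 < r^-1 - 1 by rewrite subr_gt0 invf_gt1.
have M_ge0 : 0 <= e^-1 / (r^-1 - 1) by rewrite divr_ge0 // ?invr_ge0 ltW.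
exists (Num.Def.archi_bound (e^-1 / (r^-1 - 1))).
have := archi_boundP M_ge0; set N := Num.Def.archi_bound _ => hN.
have hb := bernoulli_ineq N (ltW d_gt0); rewrite addrCA subrr addr0 in hb.
have : e^-1 < (r^-1) ^+ N by rewrite ltr_pdivrMr // in hN; lra.
by rewrite exprVn ltf_pV2 ?posrE ?exprn_gt0.
Qed.

Lemma expr_mul_eventually_lt (R : archiRealFieldType) (r b e : R) :
  0 <= r -> r < 1 -> 0 <= b -> 0 < e ->
  exists N : nat, forall n, (N <= n)%N -> r ^+ n * b < e.
Proof.
move=> r_ge0 r_lt1 b_ge0 e_gt0.
have b1_gt0 : 0 < b + 1 by lra.
have [N hN] := expr_lt_eps r_ge0 r_lt1 (divr_gt0 e_gt0 b1_gt0).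
exists N => n le_Nn.
have rn_le : r ^+ n <= r ^+ N by apply: ler_wiXn2l => //; apply: ltW.
apply: le_lt_trans (_ : _ <= r ^+ N * (b + 1)) _; last by rewrite -ltr_pdivlMr.
by apply: ler_pM; rewrite ?exprn_ge0 //; lra.
Qed.

Lemma submult_iter (R : numDomainType) (alpha : R -> R) (a q : R) :
  0 <= a -> 0 <= q -> (forall t, 0 <= t -> alpha (a * t) <= q * alpha t) ->
  forall n s, 0 <= s -> alpha (a ^+ n * s) <= q ^+ n * alpha s.
Proof.
move=> a_ge0 q_ge0 alphaM; elim=> [|n IH] s s_ge0; first by rewrite !expr0 !mul1r.
rewrite !exprS -!mulrA.
apply: le_trans (alphaM _ _) _; first by rewrite mulr_ge0 ?exprn_ge0.
by rewrite ler_wpM2l // IH.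
Qed.

Section CubicOperator.
Variables (K : fieldType) (G X : lmodType K) (k : nat).
Local Notation kk := (k%:R : K).

Lemma DkB (g h : G -> X) x y :
  Dk k g x y - Dk k h x y = Dk k (fun z => g z - h z) x y.
Proof.
have subACA (a b c d : X) : (a - b) - (c - d) = (a - c) - (b - d).
  by rewrite opprB [d - c]addrC addrACA [- b + d]addrC opprB.
have addsubACA (a b c d : X) : (a + b) - (c + d) = (a - c) + (b - d).
  by rewrite opprD addrACA.
by rewrite /Dk subACA [X in X - _ = _]subACA -!scalerBr !addsubACA.
Qed.

Lemma Dk_scale (g : G -> X) (c s : K) x y :
  Dk k (fun z => c *: g (s *: z)) x y = c *: Dk k g (s *: x) (s *: y).
Proof.
have scalerC (V : lmodType K) (a b : K) (v : V) : a *: (b *: v) = b *: (a *: v).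
  by rewrite !scalerA mulrC.
rewrite /Dk !(scalerBr s) !(scalerDr s) (scalerC _ s kk).
by rewrite !(scalerBr c) (scalerC _ c kk) (scalerC _ c (2 * _)) !scalerDr.
Qed.

Lemma Dkx0 (g : G -> X) x : 2 * kk ^+ 3 != 0 ->
  Dk k g x 0 = (2 * kk ^+ 3) *: ((kk ^+ 3)^-1 *: g (kk *: x) - g x).
Proof.
move=> two_k3_neq0; have k3_neq0 : kk ^+ 3 != 0.
  by move: two_k3_neq0; rewrite mulf_eq0 negb_or => /andP[].
rewrite scalerBr (scalerA (2 * _)) mulfK //.
rewrite /Dk !addr0 !subr0 -!mulr2n -!scaler_nat scalerA -addrA -opprD -scalerDl.
congr (_ - _ *: _).
by rewrite natrX; ring.
Qed.

Lemma cubic_map_fixed (g : G -> X) : cubic_map k g -> 2 * kk ^+ 3 != 0 ->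
  forall n x, (kk ^+ 3)^-1 ^+ n *: g (kk ^+ n *: x) = g x.
Proof.
move=> g_cubic two_k3_neq0.
have fix1 y : (kk ^+ 3)^-1 *: g (kk *: y) = g y.
  have := g_cubic y 0; rewrite Dkx0 // => /eqP.
  by rewrite scaler_eq0 (negbTE two_k3_neq0) subr_eq0 => /eqP.
elim=> [|n IH] x; first by rewrite !expr0 !scale1r.
by rewrite exprSr [kk ^+ n.+1]exprS -!scalerA fix1 IH.
Qed.

End CubicOperator.

Section NonArchimedeanAbs.
Variables (R : realType) (K : fieldType) (abs : K -> R).
Hypothesis abs_na : nonarch_abs abs.

Lemma abs_ge0 x : 0 <= abs x.
Proof. by have [ge0 _] := abs_na; apply: ge0. Qed.

Lemma abs_eq0 x : (abs x == 0) = (x == 0).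
Proof. by have [_ [eq0 _]] := abs_na; apply/eqP/eqP => /eq0. Qed.

Lemma absM x y : abs (x * y) = abs x * abs y.
Proof. by have [_ [_ [M _]]] := abs_na; apply: M. Qed.

Lemma abs_ultra x y : abs (x + y) <= Num.max (abs x) (abs y).
Proof. by have [_ [_ [_ U]]] := abs_na; apply: U. Qed.

Lemma abs0 : abs 0 = 0.
Proof. by apply/eqP; rewrite abs_eq0. Qed.

Lemma abs1 : abs 1 = 1.
Proof.
have abs1_neq0 : abs 1 != 0 by rewrite abs_eq0 oner_eq0.
by apply: (mulfI abs1_neq0); rewrite -absM !mulr1.
Qed.

Lemma absN1 : abs (-1) = 1.
Proof.
have sq : abs (-1) * abs (-1) = 1 by rewrite -absM mulrNN mulr1 abs1.
have := abs_ge0 (-1); nra.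
Qed.

Lemma absN x : abs (- x) = abs x.
Proof. by rewrite -mulN1r absM absN1 mul1r. Qed.

Lemma absV x : abs (x^-1) = (abs x)^-1.
Proof.
have [->|x_neq0] := eqVneq x 0; first by rewrite invr0 abs0 invr0.
have absx_neq0 : abs x != 0 by rewrite abs_eq0.
by apply: (mulfI absx_neq0); rewrite -absM !mulfV // abs1.
Qed.

Lemma absX x n : abs (x ^+ n) = abs x ^+ n.
Proof. by elim: n => [|n IH]; rewrite ?expr0 ?abs1 // !exprS absM IH. Qed.

Lemma abs_natr_le1 n : abs n%:R <= 1.
Proof.
elim: n => [|n IH]; first by rewrite abs0.
by rewrite -natr1; apply: le_trans (abs_ultra _ _) _; rewrite ge_max IH abs1 lexx.
Qed.

Lemma abs_natrB_le1 m n : abs (m%:R - n%:R) <= 1.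
Proof. by apply: le_trans (abs_ultra _ _) _; rewrite ge_max absN !abs_natr_le1. Qed.

Section NonArchimedeanNorm.
Variables (X : lmodType K) (nrm : X -> R).
Hypothesis nrm_na : nonarch_norm abs nrm.

Lemma nrm_ge0 u : 0 <= nrm u.
Proof. by have [ge0 _] := nrm_na; apply: ge0. Qed.

Lemma nrm_eq0 u : nrm u = 0 -> u = 0.
Proof. by have [_ [eq0 _]] := nrm_na; move/eq0. Qed.

Lemma nrmZ c u : nrm (c *: u) = abs c * nrm u.
Proof. by have [_ [_ [Z _]]] := nrm_na; apply: Z. Qed.

Lemma nrm0 : nrm 0 = 0.
Proof. by have [_ [eq0 _]] := nrm_na; apply/eq0. Qed.

Lemma nrmN u : nrm (- u) = nrm u.
Proof. by rewrite -scaleN1r nrmZ absN1 mul1r. Qed.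

Lemma nrm_distC u v : nrm (u - v) = nrm (v - u).
Proof. by rewrite -nrmN opprB. Qed.

Lemma nrmD_le u v e : nrm u <= e -> nrm v <= e -> nrm (u + v) <= e.
Proof.
have [_ [_ [_ U]]] := nrm_na.
by move=> hu hv; apply: le_trans (U _ _) _; rewrite ge_max hu hv.
Qed.

Lemma nrmB_le u v e : nrm u <= e -> nrm v <= e -> nrm (u - v) <= e.
Proof. by move=> hu hv; rewrite nrmD_le // nrmN. Qed.

Lemma nrmZ_le c u e : abs c <= 1 -> nrm u <= e -> nrm (c *: u) <= e.
Proof.
move=> hc hu; rewrite nrmZ; apply: le_trans hu.
by rewrite -[leRHS]mul1r ler_wpM2r ?nrm_ge0.
Qed.

Lemma nrm_le_eps_eq0 u : (forall eps, 0 < eps -> nrm u <= eps) -> u = 0.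
Proof.
move=> small; apply: nrm_eq0; apply/le_anti; rewrite nrm_ge0 andbT.
by apply/ler_addgt0Pr => eps eps_gt0; rewrite add0r small.
Qed.

(* Ultrametric inequality: the steps' bounds do not add up, the largest one bounds the chain. *)
Lemma ultra_telescope (u : nat -> X) (r b : R) :
  0 <= r <= 1 -> 0 <= b -> (forall n, nrm (u n.+1 - u n) <= r ^+ n * b) ->
  forall n i, nrm (u (n + i)%N - u n) <= r ^+ n * b.
Proof.
move=> /andP[r_ge0 r_le1] b_ge0 step n; elim=> [|i IH].
  by rewrite addn0 subrr nrm0 mulr_ge0 ?exprn_ge0.
rewrite addnS -(subrK (u (n + i)%N) (u _)) -addrA nrmD_le //.
by apply: le_trans (step _) _; rewrite ler_wpM2r // ler_wiXn2l // leq_addr.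
Qed.

Lemma converges_to_dist_le (u : nat -> X) l v b :
  converges_to nrm u l -> (forall n, nrm (u n - v) <= b) -> nrm (l - v) <= b.
Proof.
move=> u_l hb; apply/ler_addgt0Pr => eps eps_gt0.
have [N hN] := u_l eps eps_gt0.
have b_ge0 : 0 <= b by apply: le_trans (hb 0%N); apply: nrm_ge0.
rewrite -(subrK (u N) l) -addrA nrmD_le //.
  by rewrite nrm_distC; apply: le_trans (ltW (hN N (leqnn N))) _; rewrite lerDr.
by apply: le_trans (hb N) _; rewrite lerDl ltW.
Qed.

Variables (G : lmodType K) (k : nat).
Local Notation kk := (k%:R : K).

Lemma Dk_nrm_le (g : G -> X) x y e :
  nrm (g (kk *: x + y)) <= e -> nrm (g (kk *: x - y)) <= e ->
  nrm (g (x + y)) <= e -> nrm (g (x - y)) <= e -> nrm (g x) <= e ->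
  nrm (Dk k g x y) <= e.
Proof.
move=> h1 h2 h3 h4 h5.
have abs_c_le1 : abs (2 * ((k ^ 3)%:R - kk)) <= 1.
  by rewrite absM mulr_ile1 ?abs_ge0 ?abs_natr_le1 ?abs_natrB_le1.
rewrite /Dk; apply: nrmB_le; last exact: nrmZ_le.
apply: nrmB_le; first exact: nrmD_le.
by apply: nrmZ_le; [exact: abs_natr_le1 | exact: nrmD_le].
Qed.

Lemma Dk_limit_eq0 (g : nat -> G -> X) (C : G -> X) x y :
  (forall z, converges_to nrm (fun n => g n z) (C z)) ->
  (forall eps, 0 < eps -> exists N, forall n, (N <= n)%N -> nrm (Dk k (g n) x y) <= eps) ->
  Dk k C x y = 0.
Proof.
move=> g_C Dg_small; apply: nrm_le_eps_eq0 => eps eps_gt0.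
have near z : exists N, forall n, (N <= n)%N -> nrm (C z - g n z) <= eps.
  have [N hN] := g_C z eps eps_gt0.
  by exists N => n le_Nn; rewrite nrm_distC ltW ?hN.
have [N1 h1] := near (kk *: x + y); have [N2 h2] := near (kk *: x - y).
have [N3 h3] := near (x + y); have [N4 h4] := near (x - y); have [N5 h5] := near x.
have [N6 h6] := Dg_small eps eps_gt0.
pose N := maxn N1 (maxn N2 (maxn N3 (maxn N4 (maxn N5 N6)))).
have le_N6 : (N6 <= N)%N by rewrite /N !leq_max leqnn !orbT.
have [? ? ? ? ?] : [/\ (N1 <= N)%N, (N2 <= N)%N, (N3 <= N)%N, (N4 <= N)%N & (N5 <= N)%N].
  by rewrite /N !leq_max !leqnn !orbT.
rewrite -(subrK (Dk k (g N) x y) (Dk k C x y)) DkB nrmD_le ?h6 //.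
by rewrite Dk_nrm_le ?h1 ?h2 ?h3 ?h4 ?h5.
Qed.

End NonArchimedeanNorm.

End NonArchimedeanAbs.

Section NonArchimedeanCubicStability.
Variables (R : realType) (K : fieldType) (abs : K -> R).
Variables (X : lmodType K) (nrmX : X -> R) (G : lmodType K) (nrmG : G -> R).
Variables (k : nat) (alpha : R -> R) (delta : R) (f : G -> X).
Hypotheses (abs_na : nonarch_abs abs) (nrmX_na : nonarch_norm abs nrmX).
Hypotheses (X_complete : complete_normed nrmX) (nrmG_norm : is_norm abs nrmG).
Hypothesis abs_2k3_neq0 : abs (2 * (k ^ 3)%:R) != 0.
Hypotheses (alpha_ge0 : forall t, 0 <= t -> 0 <= alpha t)
  (alphaM : forall t, 0 <= t -> alpha (abs k%:R * t) <= alpha (abs k%:R) * alpha t)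
  (alpha_k : alpha (abs k%:R) < abs k%:R ^+ 3).
Hypothesis delta_gt0 : 0 < delta.
Hypothesis f_approx :
  forall x y, nrmX (Dk k f x y) <= delta * (alpha (nrmG x) + alpha (nrmG y)).

Local Notation kk := (k%:R : K).
Local Notation rate := (alpha (abs kk) / abs kk ^+ 3).
Local Notation bound x := ((abs (2 * (k ^ 3)%:R))^-1 * delta * alpha (nrmG x)).

Definition hyers_seq (n : nat) (x : G) : X := (kk ^+ 3)^-1 ^+ n *: f (kk ^+ n *: x).

Lemma nrmGZ c x : nrmG (c *: x) = abs c * nrmG x.
Proof. by have [_ [_ [Z _]]] := nrmG_norm; apply: Z. Qed.

Lemma nrmG_ge0 x : 0 <= nrmG x.
Proof. by have [ge0 _] := nrmG_norm; apply: ge0. Qed.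

Lemma nrmG0 : nrmG 0 = 0.
Proof. by have [_ [eq0 _]] := nrmG_norm; apply/eq0. Qed.

Lemma two_k3_neq0 : 2 * kk ^+ 3 != 0.
Proof. by rewrite -natrX -(abs_eq0 abs_na). Qed.

Lemma absk_gt0 : 0 < abs kk.
Proof.
have := two_k3_neq0; rewrite mulf_eq0 negb_or expf_eq0 /= => /andP[_ k_neq0].
by rewrite lt_def (abs_eq0 abs_na) k_neq0 (abs_ge0 abs_na).
Qed.

Lemma rate_ge0 : 0 <= rate.
Proof. by rewrite divr_ge0 ?alpha_ge0 ?exprn_ge0 ?(abs_ge0 abs_na). Qed.

Lemma rate_lt1 : rate < 1.
Proof. by rewrite ltr_pdivrMr ?exprn_gt0 ?absk_gt0 // mul1r. Qed.

(* (i) at t = 0 gives alpha 0 <= alpha |k| * alpha 0 with alpha |k| < |k|^3 <= 1. *)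
Lemma alpha0 : alpha 0 = 0.
Proof.
have q_lt1 : alpha (abs kk) < 1.
  by apply: lt_le_trans alpha_k _; rewrite exprn_ile1 ?(abs_ge0 abs_na) ?(abs_natr_le1 abs_na).
have := alphaM (lexx 0); rewrite mulr0 => h.
have := alpha_ge0 (lexx 0); nra.
Qed.

Lemma alpha_scaled n x :
  (abs kk ^+ 3)^-1 ^+ n * alpha (nrmG (kk ^+ n *: x)) <= rate ^+ n * alpha (nrmG x).
Proof.
have q_ge0 : 0 <= alpha (abs kk) by rewrite alpha_ge0 ?(abs_ge0 abs_na).
rewrite nrmGZ (absX abs_na) exprMn [_ ^+ n * _ ^+ n]mulrC -mulrA.
apply: ler_wpM2l; first by rewrite exprn_ge0 ?invr_ge0 ?exprn_ge0 ?(abs_ge0 abs_na).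
by apply: (submult_iter _ _ alphaM); rewrite ?(abs_ge0 abs_na) ?nrmG_ge0.
Qed.

Lemma abs_invk3X n : abs ((kk ^+ 3)^-1 ^+ n) = (abs kk ^+ 3)^-1 ^+ n.
Proof. by rewrite !(absX abs_na) (absV abs_na) (absX abs_na). Qed.

Lemma hyers_seq0 x : hyers_seq 0 x = f x.
Proof. by rewrite /hyers_seq !expr0 !scale1r. Qed.

Lemma hyers_seqS n x :
  hyers_seq n.+1 x = (kk ^+ 3)^-1 ^+ n *: hyers_seq 1 (kk ^+ n *: x).
Proof. by rewrite /hyers_seq expr1 exprSr [kk ^+ n.+1]exprS -!scalerA. Qed.

Lemma hyers_seq1_approx x : nrmX (hyers_seq 1 x - f x) <= bound x.
Proof.
have -> : hyers_seq 1 x - f x = (2 * kk ^+ 3)^-1 *: Dk k f x 0.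
  by rewrite Dkx0 ?two_k3_neq0 // scalerA mulVf ?two_k3_neq0 // scale1r /hyers_seq !expr1.
rewrite (nrmZ nrmX_na) (absV abs_na) -natrX -mulrA ler_wpM2l ?invr_ge0 ?(abs_ge0 abs_na) //.
by have := f_approx x 0; rewrite nrmG0 alpha0 addr0.
Qed.

Lemma invk3X_ge0 n : 0 <= (abs kk ^+ 3)^-1 ^+ n.
Proof. by rewrite exprn_ge0 ?invr_ge0 ?exprn_ge0 ?(abs_ge0 abs_na). Qed.

Lemma bound_ge0 x : 0 <= bound x.
Proof.
by rewrite !mulr_ge0 ?invr_ge0 ?(abs_ge0 abs_na) ?alpha_ge0 ?nrmG_ge0 ?ltW.
Qed.

Lemma bound_scaled n x :
  (abs kk ^+ 3)^-1 ^+ n * bound (kk ^+ n *: x) <= rate ^+ n * bound x.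
Proof.
rewrite mulrCA [rate ^+ n * _]mulrCA; apply: ler_wpM2l; last exact: alpha_scaled.
by rewrite mulr_ge0 ?invr_ge0 ?(abs_ge0 abs_na) ?ltW.
Qed.

Lemma hyers_seq_step n x :
  nrmX (hyers_seq n.+1 x - hyers_seq n x) <= rate ^+ n * bound x.
Proof.
rewrite hyers_seqS {2}/hyers_seq -scalerBr (nrmZ nrmX_na) abs_invk3X.
apply: le_trans (bound_scaled n x); apply: ler_wpM2l; first exact: invk3X_ge0.
exact: hyers_seq1_approx.
Qed.

Lemma hyers_seq_cvg :
  exists C : G -> X, forall x, converges_to nrmX (hyers_seq ^~ x) (C x).
Proof.
have rate01 : 0 <= rate <= 1 by rewrite rate_ge0 ltW ?rate_lt1.
have cauchy x : cauchy_seq nrmX (hyers_seq ^~ x).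
  move=> eps eps_gt0.
  have [N hN] := expr_mul_eventually_lt rate_ge0 rate_lt1 (bound_ge0 x) eps_gt0.
  have dist_le n i : nrmX (hyers_seq (n + i)%N x - hyers_seq n x) <= rate ^+ n * bound x.
    exact: (ultra_telescope nrmX_na rate01 (bound_ge0 x) (hyers_seq_step ^~ x)).
  exists N => m n le_Nm le_Nn; wlog le_nm : m n le_Nm le_Nn / (n <= m)%N.
    move=> hwlog; have [/hwlog|/ltnW/hwlog] := leqP n m; first exact.
    by rewrite (nrm_distC abs_na nrmX_na); apply.
  by rewrite -(subnKC le_nm); apply: le_lt_trans (dist_le _ _) (hN _ le_Nn).
have lim x : {l | converges_to nrmX (hyers_seq ^~ x) l}.
  exact/constructive_indefinite_description/X_complete/cauchy.
by exists (fun x => sval (lim x)) => x; apply: svalP.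
Qed.

Lemma Dk_hyers_seq n x y :
  nrmX (Dk k (hyers_seq n) x y) <= rate ^+ n * (delta * (alpha (nrmG x) + alpha (nrmG y))).
Proof.
rewrite /hyers_seq Dk_scale (nrmZ nrmX_na) abs_invk3X.
apply: le_trans (ler_wpM2l (invk3X_ge0 n) (f_approx _ _)) _.
rewrite mulrCA [rate ^+ n * _]mulrCA; apply: ler_wpM2l; first exact: ltW.
by rewrite !mulrDr; apply: lerD; apply: alpha_scaled.
Qed.

Lemma hyers_limit_cubic (C : G -> X) :
  (forall x, converges_to nrmX (hyers_seq ^~ x) (C x)) -> cubic_map k C.
Proof.
move=> hC x y; apply: (Dk_limit_eq0 abs_na nrmX_na hC) => eps eps_gt0.
have b_ge0 : 0 <= delta * (alpha (nrmG x) + alpha (nrmG y)).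
  by rewrite mulr_ge0 ?addr_ge0 ?alpha_ge0 ?nrmG_ge0 ?ltW.
have [N hN] := expr_mul_eventually_lt rate_ge0 rate_lt1 b_ge0 eps_gt0.
by exists N => n le_Nn; apply: le_trans (Dk_hyers_seq n x y) (ltW (hN n le_Nn)).
Qed.

Lemma hyers_limit_approx (C : G -> X) :
  (forall x, converges_to nrmX (hyers_seq ^~ x) (C x)) ->
  forall x, nrmX (f x - C x) <= bound x.
Proof.
move=> hC x; rewrite (nrm_distC abs_na nrmX_na).
apply: (converges_to_dist_le abs_na nrmX_na (hC x)) => n.
have rate01 : 0 <= rate <= 1 by rewrite rate_ge0 ltW ?rate_lt1.
rewrite -(hyers_seq0 x) -[n]add0n -[bound x]mul1r -(expr0 rate).
exact: (ultra_telescope nrmX_na rate01 (bound_ge0 x) (hyers_seq_step ^~ x)).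
Qed.

Lemma cubic_approx_unique (C C' : G -> X) : cubic_map k C -> cubic_map k C' ->
  (forall x, nrmX (f x - C x) <= bound x) -> (forall x, nrmX (f x - C' x) <= bound x) ->
  C' = C.
Proof.
move=> C_cubic C'_cubic f_C f_C'; apply: functional_extensionality => x.
apply/eqP; rewrite -subr_eq0; apply/eqP; apply: (nrm_le_eps_eq0 nrmX_na) => eps eps_gt0.
have dist y : nrmX (C' y - C y) <= bound y.
  have -> : C' y - C y = (f y - C y) - (f y - C' y).
    by rewrite opprB [RHS]addrC [RHS]addrA subrK.
  exact: (nrmB_le abs_na nrmX_na).
have [N hN] := expr_mul_eventually_lt rate_ge0 rate_lt1 (bound_ge0 x) eps_gt0.
rewrite -(cubic_map_fixed C_cubic two_k3_neq0 N x).
rewrite -(cubic_map_fixed C'_cubic two_k3_neq0 N x) -scalerBr (nrmZ nrmX_na) abs_invk3X.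
apply: le_trans (ltW (hN N (leqnn N))); apply: le_trans (bound_scaled N x).
by apply: ler_wpM2l; [exact: invk3X_ge0 | exact: dist].
Qed.

End NonArchimedeanCubicStability.

Theorem corollary2p2 (R : realType) (K : fieldType) (abs : K -> R)
  (X : lmodType K) (nrmX : X -> R) (G : lmodType K) (nrmG : G -> R)
  (k : nat) (alpha : R -> R) (delta : R) (f : G -> X) :
  nonarch_abs abs -> nontrivial_abs abs ->
  nonarch_norm abs nrmX -> complete_normed nrmX ->
  is_norm abs nrmG ->
  abs (2 * (k ^ 3)%:R) != 0 ->
  (forall t, 0 <= t -> 0 <= alpha t) ->
  (forall t, 0 <= t -> alpha (abs k%:R * t) <= alpha (abs k%:R) * alpha t) ->
  alpha (abs k%:R) < abs k%:R ^+ 3 ->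
  0 < delta ->
  (forall x y, nrmX (Dk k f x y) <= delta * (alpha (nrmG x) + alpha (nrmG y))) ->
  exists C : G -> X,
    [/\ cubic_map k C,
        (forall x, nrmX (f x - C x) <= (abs (2 * (k ^ 3)%:R))^-1 * delta * alpha (nrmG x))
      & (forall C' : G -> X, cubic_map k C' ->
           (forall x, nrmX (f x - C' x) <= (abs (2 * (k ^ 3)%:R))^-1 * delta * alpha (nrmG x)) ->
           C' = C)].
Proof.
move=> abs_na _ nrmX_na X_complete nrmG_norm abs_2k3_neq0
  alpha_ge0 alphaM alpha_k delta_gt0 f_approx.
have [C f_C] := hyers_seq_cvg abs_na nrmX_na X_complete nrmG_norm abs_2k3_neq0
  alpha_ge0 alphaM alpha_k delta_gt0 f_approx.
have C_cubic := hyers_limit_cubic abs_na nrmX_na nrmG_norm abs_2k3_neq0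
  alpha_ge0 alphaM alpha_k delta_gt0 f_approx f_C.
have C_approx := hyers_limit_approx abs_na nrmX_na nrmG_norm abs_2k3_neq0
  alpha_ge0 alphaM alpha_k delta_gt0 f_approx f_C.
exists C; split => // C' C'_cubic C'_approx.
exact: (cubic_approx_unique abs_na nrmX_na nrmG_norm abs_2k3_neq0
  alpha_ge0 alphaM alpha_k delta_gt0 C_cubic C'_cubic C_approx C'_approx).
Qed.
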